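(* Let $(M,\underline{g})$ be a stationary axisymmetric vacuum spacetime with line element, in coordinates $(t,\rho,z,\phi)$, $$\underline{g}=k^2e^{-2\psi}\left[e^{2\gamma}\left(d\rho^2+dz^2\right)+R^2d\phi^2\right]-e^{2\psi}\left(dt-\omega\, d\phi\right)^2,$$ where $k$ is a real constant and $\psi,\gamma,\omega,R$ are smooth functions of $(\rho,z)$ only. Suppose $\eta=C_1\partial_t+C_2\partial_\rho+C_3\partial_z+C_4\partial_\phi$ satisfies $\mathcal{L}_\eta\underline{g}=2\Psi\,\underline{g}$ for a constant $\Psi$, where each component $C_i=C_i(t,\rho)$ is a function of $t$ and $\rho$ only, and suppose $C_2$ and $C_3$ are constants with $C_2=C_3=0$. Then $\Psi=0$, i.e. $\eta$ is a Killing vector, and $\eta=c_1\partial_t+c_4\partial_\phi$ for constants $c_1,c_4$.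
   Context: The metric components are $\underline{g}_{tt}=-e^{2\psi}$, $\underline{g}_{t\phi}=\omega e^{2\psi}$, $\underline{g}_{\rho\rho}=\underline{g}_{zz}=k^2e^{2(\gamma-\psi)}$, and $\underline{g}_{\phi\phi}=W:=k^2R^2e^{-2\psi}-\omega^2e^{2\psi}$. The metric is assumed nondegenerate. The spacetime is a vacuum solution of Einstein's equations, constructed from a complex Ernst potential $\mathcal{E}$ with $\mathrm{Re}(\mathcal{E})=e^{2\psi}$ satisfying $\mathrm{Re}(\mathcal{E})\bar\nabla^2\mathcal{E}=\bar\nabla\mathcal{E}\cdot\bar\nabla\mathcal{E}$ with $\bar\nabla^2=\partial_{\rho\rho}+\rho^{-1}\partial_\rho+\partial_{zz}$, $\bar\nabla=(\partial_\rho,\partial_z)$, and $R$ satisfies $R_{,\rho\rho}+R_{,zz}=0$. A vector field with $\mathcal{L}_\eta\underline{g}=2\Psi\underline{g}$, $\Psi$ constant, is called homothetic; if $\Psi=0$ it is a Killing vector. *)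

From HB Require Import structures.
From mathcomp Require Import all_boot all_order all_algebra.
From mathcomp Require Import all_classical all_reals all_analysis.
Set Implicit Arguments. Unset Strict Implicit. Unset Printing Implicit Defensive.
Import Order.TTheory GRing.Theory Num.Theory.
Import numFieldNormedType.Exports.
Local Open Scope classical_set_scope.
Local Open Scope ring_scope.

Fixpoint iterD (R : realType) (V : normedModType R) (ds : seq V) (f : V -> R^o)
  : V -> R^o :=
  match ds with
  | [::] => f
  | d :: ds' => fun x => 'D_d (iterD ds' f) x
  end.

Definition smooth_on (R : realType) (V : normedModType R) (U : set V)
  (f : V -> R^o) : Prop :=
  forall (ds : seq V) (x : V), U x -> differentiable (iterD ds f) x.

Definition lift2 (R : realType) (f : R -> R -> R) : 'rV[R]_2 -> R^o :=
  fun v => f (v ord0 ord0) (v ord0 (@Ordinal 2 1 isT)).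

Definition pt2 (R : realType) (a b : R) : 'rV[R]_2 :=
  \row_(j < 2) (if val j == 0%N then a else b).

Definition pd2 (R : realType) (i : 'I_2) (f : R -> R -> R) : R -> R -> R :=
  fun a b => 'D_(delta_mx ord0 i : 'rV[R]_2) (lift2 f) (pt2 a b).

Definition i0 : 'I_2 := ord0.
Definition i1 : 'I_2 := @Ordinal 2 1 isT.

(* The half plane rho > 0 (first variable positive), used both for (rho,z)
   and for (t,rho) (second variable positive). *)
Definition first_pos (R : realType) : set 'rV[R]_2 := [set v | 0 < v ord0 i0].
Definition second_pos (R : realType) : set 'rV[R]_2 := [set v | 0 < v ord0 i1].

Definition ct : 'I_4 := @Ordinal 4 0 isT.
Definition crho : 'I_4 := @Ordinal 4 1 isT.
Definition cz : 'I_4 := @Ordinal 4 2 isT.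
Definition cphi : 'I_4 := @Ordinal 4 3 isT.

(* Metric components g_{ab}(x) of
   k^2 e^{-2psi}[e^{2gamma}(drho^2+dz^2)+R^2 dphi^2] - e^{2psi}(dt - omega dphi)^2 *)
Definition metric (R : realType) (k : R) (psi gam om Rf : R -> R -> R)
  (a b : 'I_4) (x : 'rV[R]_4) : R :=
  let r := x ord0 crho in let z := x ord0 cz in
  let e2psi := expR (2 * psi r z) in
  if (val a == 0%N) && (val b == 0%N) then - e2psi
  else if ((val a == 0%N) && (val b == 3%N)) || ((val a == 3%N) && (val b == 0%N))
  then om r z * e2psi
  else if ((val a == 1%N) && (val b == 1%N)) || ((val a == 2%N) && (val b == 2%N))
  then k ^+ 2 * expR (2 * (gam r z - psi r z))
  else if (val a == 3%N) && (val b == 3%N)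
  then k ^+ 2 * (Rf r z) ^+ 2 * expR (- (2 * psi r z)) - (om r z) ^+ 2 * e2psi
  else 0.

Definition metric_mx (R : realType) (k : R) (psi gam om Rf : R -> R -> R)
  (x : 'rV[R]_4) : 'M[R]_4 :=
  \matrix_(a < 4, b < 4) metric k psi gam om Rf a b x.

Definition pd4 (R : realType) (c : 'I_4) (f : 'rV[R]_4 -> R^o) (x : 'rV[R]_4) : R :=
  'D_(delta_mx ord0 c : 'rV[R]_4) f x.

Definition lie_deriv (R : realType) (eta : 'I_4 -> 'rV[R]_4 -> R^o)
  (g : 'I_4 -> 'I_4 -> 'rV[R]_4 -> R^o) (a b : 'I_4) (x : 'rV[R]_4) : R :=
  \sum_(c < 4) (eta c x * pd4 c (g a b) x
               + g c b x * pd4 a (eta c) x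
               + g a c x * pd4 b (eta c) x).

(* eta = C_1 d_t + C_2 d_rho + C_3 d_z + C_4 d_phi with C_i = C_i(t, rho);
   here C : 'I_4 -> R -> R -> R, C i t rho (index i = 0..3 for C_1..C_4). *)
Definition vfield (R : realType) (C : 'I_4 -> R -> R -> R) (c : 'I_4)
  (x : 'rV[R]_4) : R := C c (x ord0 ct) (x ord0 crho).

Definition lap_axi (R : realType) (f : R -> R -> R) (r z : R) : R :=
  pd2 i0 (pd2 i0 f) r z + r^-1 * pd2 i0 f r z + pd2 i1 (pd2 i1 f) r z.

Definition grad_dot (R : realType) (f h : R -> R -> R) (r z : R) : R :=
  pd2 i0 f r z * pd2 i0 h r z + pd2 i1 f r z * pd2 i1 h r z.

(* Ernst equation Re(E) lap E = grad E . grad E for E = a + i b, written out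
   in real and imaginary parts. *)
Definition ernst_eq (R : realType) (a b : R -> R -> R) (r z : R) : Prop :=
  a r z * lap_axi a r z = grad_dot a a r z - grad_dot b b r z /\
  a r z * lap_axi b r z = 2 * grad_dot a b r z.

From HB Require Import structures.
From mathcomp Require Import all_boot all_order all_algebra.
From mathcomp Require Import all_classical all_reals all_analysis.
From mathcomp Require Import ring.
Import Order.TTheory GRing.Theory Num.Theory.
Import numFieldNormedType.Exports.
Local Open Scope classical_set_scope.
Local Open Scope ring_scope.

Set Implicit Arguments.
Unset Strict Implicit.
Unset Printing Implicit Defensive.

(* The metric coefficients depend only on (rho, z), while eta = C_1 d_t + C_4 d_phi
   has coefficients depending only on (t, rho).  Hence (L_eta g)_zz vanishes
   identically, and since g_zz = k^2 e^(2(gamma - psi)) with k <> 0 (otherwise the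
   rho row of g vanishes), the homothety equation forces Psi = 0.  The Killing
   equations for the index pairs (d, t) and (d, phi), d in {t, rho}, then say that
   (d_d C_1, d_d C_4) lies in the kernel of the (t, phi) block of g, which is
   invertible because det g = g_rhorho g_zz (g_tt g_phiphi - g_tphi^2) <> 0.  So
   C_1 and C_4 have vanishing partial derivatives on the half plane rho > 0 and
   are constant there. *)

Section LineDerivative.
Variables (R : realType) (V U : normedModType R).
Variables (f : V -> R^o) (g : U -> R^o) (a v : V) (b u : U).
Hypothesis fg_line : forall h : R, f (h *: v + a) = g (h *: u + b).

Let difference_quotient_line_eq :
  (fun h : R => h^-1 *: ((f \o shift a) (h *: v) - f a)) =
  (fun h : R => h^-1 *: ((g \o shift b) (h *: u) - g b)).
Proof.
have fg0 : f a = g b by have := fg_line 0; rewrite !scale0r !add0r.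
by apply/funext => h /=; rewrite /shift fg_line fg0.
Qed.

Lemma derive_line_eq : 'D_v f a = 'D_u g b.
Proof. by rewrite /derive difference_quotient_line_eq. Qed.

Lemma derivable_line_eq : derivable f a v = derivable g b u.
Proof. by rewrite /derivable difference_quotient_line_eq. Qed.

End LineDerivative.

Lemma derive_line_cst (R : realType) (V : normedModType R) (f : V -> R^o) a v :
  (forall h : R, f (h *: v + a) = f a) -> 'D_v f a = 0.
Proof.
by move=> fa; rewrite (@derive_line_eq _ _ _ _ (cst (f a)) a v a v) ?derive_cst.
Qed.

Section CoordinateLines.
Variables (R : realType) (n : nat) (x : 'rV[R]_n) (c : 'I_n) (h : R).

Lemma shift_delta_mx_eq : (h *: delta_mx 0 c + x) 0 c = h + x 0 c.
Proof. by rewrite !mxE !eqxx mulr1. Qed.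

Lemma shift_delta_mx_neq d : c != d -> (h *: delta_mx 0 c + x) 0 d = x 0 d.
Proof. by move=> cd; rewrite !mxE eqxx eq_sym (negbTE cd) mulr0 add0r. Qed.

End CoordinateLines.

Lemma scaler1_line (R : realType) (h t : R) : h *: (1 : R^o) + t = h + t.
Proof. by rewrite [h *: _]mulr1. Qed.

Lemma ord4P (j : 'I_4) : j = ct \/ j = crho \/ j = cz \/ j = cphi.
Proof.
case: j => [[|[|[|[|j]]]] Hj] //.
- by left; apply: val_inj.
- by right; left; apply: val_inj.
- by right; right; left; apply: val_inj.
- by right; right; right; apply: val_inj.
Qed.

Lemma sum_ord4 (R : realType) (F : 'I_4 -> R) :
  \sum_(c < 4) F c = F ct + F crho + F cz + F cphi.
Proof.
rewrite !big_ord_recl big_ord0 addr0 !addrA.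
by congr (_ + _ + _ + _); congr F; apply: val_inj.
Qed.

Section Determinants.
Variable F : fieldType.

Lemma det_zero_row n (A : 'M[F]_n) i : (forall j, A i j = 0) -> \det A = 0.
Proof. by move=> Ai0; rewrite (expand_det_row A i) big1 // => j _; rewrite Ai0 mul0r. Qed.

Lemma det_singular_sym_block n (A : 'M[F]_n) (i j : 'I_n) :
  i != j -> A i i != 0 -> A j i = A i j -> A i i * A j j - A i j ^+ 2 = 0 ->
  (forall l, l != i -> l != j -> A i l = 0 /\ A j l = 0) -> \det A = 0.
Proof.
move=> ij Aii0 Asym Ablock Aout; apply/eqP/det0P.
exists (A i j *: delta_mx 0 i - A i i *: delta_mx 0 j).
  apply: contra Aii0 => /eqP /matrixP /(_ 0 j); rewrite !mxE !eqxx eq_sym (negbTE ij).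
  by rewrite mulr0 mulr1 sub0r => /eqP; rewrite oppr_eq0.
rewrite mulmxBl -!scalemxAl -!rowE; apply/rowP => l; rewrite !mxE.
have [-> | li] := eqVneq l i; first by rewrite Asym mulrC subrr.
have [-> | lj] := eqVneq l j; first by rewrite -opprB -expr2 Ablock oppr0.
by have [-> ->] := Aout l li lj; rewrite !mulr0 subrr.
Qed.

Lemma sym2_system_eq0 (p q s a b : F) :
  p * s - q ^+ 2 != 0 -> p * a + q * b = 0 -> q * a + s * b = 0 -> a = 0 /\ b = 0.
Proof.
move=> det0 e1 e2.
have ha : a * (p * s - q ^+ 2) = s * (p * a + q * b) - q * (q * a + s * b) by ring.
have hb : b * (p * s - q ^+ 2) = p * (q * a + s * b) - q * (p * a + q * b) by ring.
rewrite e1 e2 !mulr0 subrr in ha hb.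
by move: ha hb => /eqP; rewrite mulf_eq0 (negbTE det0) orbF => /eqP -> /eqP;
  rewrite mulf_eq0 (negbTE det0) orbF => /eqP ->.
Qed.

End Determinants.

Lemma is_derive_0_is_cst_gt (R : realType) (f : R -> R) (a : R) :
  (forall s, a < s -> is_derive s 1 f 0) -> forall x y, a < x -> a < y -> f x = f y.
Proof.
move=> f'0 x y ax ay.
wlog xy : x y ax ay / x <= y.
  by move=> H; case: (leP x y) => [/H|/ltW /H] ->.
have f'0_xy z : z \in `]x, y[ -> is_derive z 1 f 0.
  by rewrite in_itv /= => /andP [xz _]; apply: f'0; apply: lt_trans xz.
have f_cont : {within `[x, y], continuous f}.
  apply: derivable_within_continuous => z; rewrite in_itv /= => /andP [xz _].
  by have [] := f'0 z (lt_le_trans ax xz).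
have [z _] := @MVT_segment R f (fun=> 0) x y xy f'0_xy f_cont.
by rewrite mul0r => /eqP; rewrite subr_eq0 => /eqP.
Qed.

Section PartialDerivatives.
Variable R : realType.

Lemma pd4_vfield_t (C : 'I_4 -> R -> R -> R) c (x : 'rV[R]_4) :
  pd4 ct (vfield C c) x = 'D_1 (fun s : R^o => C c s (x 0 crho)) (x 0 ct).
Proof.
apply: derive_line_eq => h.
by rewrite /vfield shift_delta_mx_eq shift_delta_mx_neq // scaler1_line.
Qed.

Lemma pd4_vfield_rho (C : 'I_4 -> R -> R -> R) c (x : 'rV[R]_4) :
  pd4 crho (vfield C c) x = 'D_1 (fun s : R^o => C c (x 0 ct) s) (x 0 crho).
Proof.
apply: derive_line_eq => h.
by rewrite /vfield shift_delta_mx_eq shift_delta_mx_neq // scaler1_line.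
Qed.

Lemma pd4_vfield_z (C : 'I_4 -> R -> R -> R) c (x : 'rV[R]_4) :
  pd4 cz (vfield C c) x = 0.
Proof. by apply: derive_line_cst => h; rewrite /vfield !shift_delta_mx_neq. Qed.

Lemma pd4_vfield_phi (C : 'I_4 -> R -> R -> R) c (x : 'rV[R]_4) :
  pd4 cphi (vfield C c) x = 0.
Proof. by apply: derive_line_cst => h; rewrite /vfield !shift_delta_mx_neq. Qed.

Lemma pd4_vfield_eq0 (C : 'I_4 -> R -> R -> R) c d (x : 'rV[R]_4) :
  (forall t r, C c t r = 0) -> pd4 d (vfield C c) x = 0.
Proof. by move=> C0; apply: derive_line_cst => h; rewrite /vfield !C0. Qed.

Lemma derivable_lift2_fst (f : R -> R -> R) t r :
  derivable (lift2 f) (pt2 t r) (delta_mx 0 i0) = derivable (fun s : R^o => f s r) t 1.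
Proof.
apply: derivable_line_eq => h.
by rewrite /lift2 shift_delta_mx_eq shift_delta_mx_neq // !mxE scaler1_line.
Qed.

Lemma derivable_lift2_snd (f : R -> R -> R) t r :
  derivable (lift2 f) (pt2 t r) (delta_mx 0 i1) = derivable (fun s : R^o => f t s) r 1.
Proof.
apply: derivable_line_eq => h.
by rewrite /lift2 shift_delta_mx_eq shift_delta_mx_neq // !mxE scaler1_line.
Qed.

Lemma vfield_cst (C : 'I_4 -> R -> R -> R) c :
  smooth_on (@second_pos R) (lift2 (C c)) ->
  (forall x : 'rV[R]_4, 0 < x 0 crho ->
     pd4 ct (vfield C c) x = 0 /\ pd4 crho (vfield C c) x = 0) ->
  forall t r, 0 < r -> C c t r = C c 0 1.
Proof.
move=> C_smooth C'0 t r r_pos.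
pose x t r : 'rV[R]_4 := t *: delta_mx 0 ct + r *: delta_mx 0 crho.
have x_t t' r' : x t' r' 0 ct = t' by rewrite !mxE /= mulr1 mulr0 addr0.
have x_rho t' r' : x t' r' 0 crho = r' by rewrite !mxE /= mulr1 mulr0 add0r.
have x_pos t' r' : 0 < r' -> 0 < x t' r' 0 crho by rewrite x_rho.
have C_diff (t' r' : R) : 0 < r' -> differentiable (lift2 (C c)) (pt2 t' r').
  by move=> r'_pos; apply: (C_smooth [::]); rewrite /second_pos /= mxE.
have C'0_t (t' r' : R) : 0 < r' -> is_derive t' 1 (fun s => C c s r') 0.
  move=> r'_pos; apply: DeriveDef.
    by rewrite -derivable_lift2_fst; apply: diff_derivable; apply: C_diff.
  have [+ _] := C'0 _ (x_pos t' r' r'_pos).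
  by rewrite pd4_vfield_t x_t x_rho.
have C'0_rho (t' r' : R) : 0 < r' -> is_derive r' 1 (fun s => C c t' s) 0.
  move=> r'_pos; apply: DeriveDef.
    by rewrite -derivable_lift2_snd; apply: diff_derivable; apply: C_diff.
  have [_ +] := C'0 _ (x_pos t' r' r'_pos).
  by rewrite pd4_vfield_rho x_t x_rho.
rewrite (is_derive_0_is_cst _ 0 (fun s => C'0_t s r r_pos)).
by apply: (@is_derive_0_is_cst_gt _ (C c 0) 0) r_pos ltr01 => s; apply: C'0_rho.
Qed.

End PartialDerivatives.

Section StationaryAxisymmetricMetric.
Variables (R : realType) (k : R) (psi gam om Rf : R -> R -> R).
Local Notation g := (metric k psi gam om Rf).

Lemma metric_eq_rho_z a b (x y : 'rV[R]_4) :
  y 0 crho = x 0 crho -> y 0 cz = x 0 cz -> g a b y = g a b x.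
Proof. by rewrite /metric => -> ->. Qed.

Lemma pd4_metric_t a b x : pd4 ct (g a b) x = 0.
Proof.
by apply: derive_line_cst => h; apply: metric_eq_rho_z; rewrite shift_delta_mx_neq.
Qed.

Lemma pd4_metric_phi a b x : pd4 cphi (g a b) x = 0.
Proof.
by apply: derive_line_cst => h; apply: metric_eq_rho_z; rewrite shift_delta_mx_neq.
Qed.

Lemma metric_phi_t x : g cphi ct x = g ct cphi x.
Proof. by []. Qed.

Lemma metric_rho_t x : g crho ct x = 0.
Proof. by []. Qed.

Lemma metric_rho_phi x : g crho cphi x = 0.
Proof. by []. Qed.

Lemma metric_k_neq0 x : \det (metric_mx k psi gam om Rf x) != 0 -> k != 0.
Proof.
apply: contra => /eqP k0; apply/eqP; apply: (@det_zero_row _ _ _ crho) => j.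
by rewrite mxE /metric k0; case: (ord4P j) => [|[|[|]]] -> //=; rewrite expr0n !mul0r.
Qed.

Lemma metric_zz_neq0 x : k != 0 -> g cz cz x != 0.
Proof. by move=> k0; apply: mulf_neq0; rewrite ?expf_neq0 // gt_eqF ?expR_gt0. Qed.

Lemma metric_tphi_det_neq0 x : \det (metric_mx k psi gam om Rf x) != 0 ->
  g ct ct x * g cphi cphi x - g ct cphi x ^+ 2 != 0.
Proof.
apply: contra => /eqP block0; apply/eqP.
apply: (@det_singular_sym_block _ _ _ ct cphi); rewrite ?mxE //.
- by rewrite /metric /= oppr_eq0 gt_eqF ?expR_gt0.
- by move=> l; case: (ord4P l) => [|[|[|]]] ->; rewrite ?eqxx // !mxE.
Qed.

End StationaryAxisymmetricMetric.

Lemma lie_deriv_tphi (R : realType) (eta : 'I_4 -> 'rV[R]_4 -> R^o)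
    (g : 'I_4 -> 'I_4 -> 'rV[R]_4 -> R^o) a b x :
  pd4 ct (g a b) x = 0 -> pd4 cphi (g a b) x = 0 ->
  eta crho x = 0 -> eta cz x = 0 ->
  (forall d, pd4 d (eta crho) x = 0) -> (forall d, pd4 d (eta cz) x = 0) ->
  lie_deriv eta g a b x =
  g ct b x * pd4 a (eta ct) x + g cphi b x * pd4 a (eta cphi) x
  + g a ct x * pd4 b (eta ct) x + g a cphi x * pd4 b (eta cphi) x.
Proof.
move=> gt gphi eta_rho eta_z eta_rho' eta_z'.
rewrite /lie_deriv sum_ord4 gt gphi eta_rho eta_z !eta_rho' !eta_z'.
by rewrite !mulr0 !mul0r !add0r !addr0; ring.
Qed.

Section KillingEquations.
Variables (R : realType) (k : R) (psi gam om Rf : R -> R -> R) (C : 'I_4 -> R -> R -> R).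
Hypotheses (C_rho0 : forall t r, C crho t r = 0) (C_z0 : forall t r, C cz t r = 0).
Local Notation g := (metric k psi gam om Rf).
Local Notation eta := (vfield C).

Lemma lie_deriv_metric a b x :
  lie_deriv eta g a b x =
  g ct b x * pd4 a (eta ct) x + g cphi b x * pd4 a (eta cphi) x
  + g a ct x * pd4 b (eta ct) x + g a cphi x * pd4 b (eta cphi) x.
Proof.
apply: lie_deriv_tphi; rewrite ?pd4_metric_t ?pd4_metric_phi //.
- exact: C_rho0.
- exact: C_z0.
- by move=> d; apply: pd4_vfield_eq0.
- by move=> d; apply: pd4_vfield_eq0.
Qed.

Lemma lie_deriv_metric_zz x : lie_deriv eta g cz cz x = 0.
Proof. by rewrite lie_deriv_metric !pd4_vfield_z !mulr0 !addr0. Qed.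

Lemma killing_tphi_pd4_eq0_at d x : d = ct \/ d = crho ->
  \det (metric_mx k psi gam om Rf x) != 0 ->
  lie_deriv eta g d ct x = 0 -> lie_deriv eta g d cphi x = 0 ->
  pd4 d (eta ct) x = 0 /\ pd4 d (eta cphi) x = 0.
Proof.
move=> d_t_rho det_neq0 Ldt Ldphi.
apply: sym2_system_eq0 (metric_tphi_det_neq0 det_neq0) _ _; last first.
  by rewrite lie_deriv_metric !pd4_vfield_phi !mulr0 !addr0 in Ldphi.
rewrite lie_deriv_metric in Ldt; case: d_t_rho => d_eq; rewrite d_eq in Ldt *.
- have : 2 * (g ct ct x * pd4 ct (eta ct) x + g ct cphi x * pd4 ct (eta cphi) x) = 0.
    by rewrite -Ldt metric_phi_t; ring.
  by move/eqP; rewrite mulf_eq0 pnatr_eq0 => /eqP.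
- by move: Ldt; rewrite metric_phi_t metric_rho_t metric_rho_phi !mul0r !addr0.
Qed.

Lemma killing_tphi_pd4_eq0 x :
  \det (metric_mx k psi gam om Rf x) != 0 -> (forall a b, lie_deriv eta g a b x = 0) ->
  [/\ pd4 ct (eta ct) x = 0, pd4 ct (eta cphi) x = 0,
      pd4 crho (eta ct) x = 0 & pd4 crho (eta cphi) x = 0].
Proof.
move=> det_neq0 killing.
have [t_t t_phi] :=
  killing_tphi_pd4_eq0_at (or_introl erefl) det_neq0 (killing _ _) (killing _ _).
have [rho_t rho_phi] :=
  killing_tphi_pd4_eq0_at (or_intror erefl) det_neq0 (killing _ _) (killing _ _).
by split.
Qed.

End KillingEquations.

Theorem proposition5 (R : realType) (k : R) (psi gam om Rf Eim : R -> R -> R)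
  (C : 'I_4 -> R -> R -> R) (Psi : R) :
  (* smoothness of the metric functions on the domain rho > 0 *)
  smooth_on (@first_pos R) (lift2 psi) ->
  smooth_on (@first_pos R) (lift2 gam) ->
  smooth_on (@first_pos R) (lift2 om) ->
  smooth_on (@first_pos R) (lift2 Rf) ->
  (* vacuum: Ernst potential E = e^{2 psi} + i Eim satisfying the Ernst equation *)
  smooth_on (@first_pos R) (lift2 Eim) ->
  (forall r z, 0 < r -> ernst_eq (fun r z => expR (2 * psi r z)) Eim r z) ->
  (* R harmonic *)
  (forall r z, 0 < r -> pd2 i0 (pd2 i0 Rf) r z + pd2 i1 (pd2 i1 Rf) r z = 0) ->
  (* nondegenerate metric *)
  (forall x : 'rV[R]_4, 0 < x ord0 crho -> \det (metric_mx k psi gam om Rf x) != 0) ->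
  (* components C_i(t, rho), smooth *)
  (forall i, smooth_on (@second_pos R) (lift2 (C i))) ->
  (* C_2 = C_3 = 0 *)
  (forall t r, C crho t r = 0) ->
  (forall t r, C cz t r = 0) ->
  (* homothety equation L_eta g = 2 Psi g *)
  (forall (x : 'rV[R]_4) (a b : 'I_4), 0 < x ord0 crho ->
     lie_deriv (vfield C) (metric k psi gam om Rf) a b x
     = 2 * Psi * metric k psi gam om Rf a b x) ->
  Psi = 0 /\
  exists c1 c4 : R, forall t r, 0 < r -> C ct t r = c1 /\ C cphi t r = c4.
Proof.
move=> _ _ _ _ _ _ _ nondeg C_smooth C_rho0 C_z0 homothety.
have x1_pos : 0 < (delta_mx 0 crho : 'rV[R]_4) 0 crho by rewrite mxE !eqxx ltr01.
have k_neq0 := metric_k_neq0 (nondeg _ x1_pos).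
have Psi0 : Psi = 0.
  have := homothety _ cz cz x1_pos; rewrite lie_deriv_metric_zz // => /esym/eqP.
  have zz_neq0 := metric_zz_neq0 psi gam om Rf (delta_mx 0 crho) k_neq0.
  by rewrite mulf_eq0 (negbTE zz_neq0) orbF mulf_eq0 pnatr_eq0 => /eqP.
split=> //.
have partials_eq0 (x : 'rV[R]_4) : 0 < x 0 crho ->
    [/\ pd4 ct (vfield C ct) x = 0, pd4 ct (vfield C cphi) x = 0,
        pd4 crho (vfield C ct) x = 0 & pd4 crho (vfield C cphi) x = 0].
  move=> x_pos; apply: killing_tphi_pd4_eq0 => // [|a b]; first exact: nondeg.
  by rewrite homothety // Psi0 mulr0 mul0r.
exists (C ct 0 1), (C cphi 0 1) => t r r_pos.
by split; apply: vfield_cst => // x /partials_eq0 [].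
Qed.
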